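(* Let $G$ and $L$ be topological groups with $G$ a Baire space, and let $H$ be a first countable convergence group. Then every separately continuous bihomomorphism $u: G\times H\to L$ is jointly continuous (with respect to the product convergence structure on $G\times H$).
   Context: All groups are abelian. A convergence structure on a set $X$ assigns to each $x$ a collection of filters converging to $x$. This assignment must satisfy three conditions: point ultrafilters converge to their point; finite intersections of filters converging to $x$ converge to $x$; and finer filters of convergent filters converge. A map is continuous if it sends filters converging to $x$ to filters converging to the image of $x$. A convergence group is an abelian group with a convergence structure such that $\mathcal F\to x$, $\mathcal G\to y$ imply $\mathcal F-\mathcal G\to x-y$. Topological groups are convergence groups, with convergent filters being those finer than the neighbourhood filter. In the product convergence structure, a filter converges iff its projections converge. A convergence space is first countable if for every filter $\mathcal F\to x$ there is a filter $\mathcal V\subseteq\mathcal F$ with a countable base such that $\mathcal V\to x$. A bihomomorphism is a map that is a homomorphism in each variable. It is separately continuous if it is continuous in each variable separately. *)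

From HB Require Import structures.
From mathcomp Require Import all_boot all_algebra.
Set Implicit Arguments. Unset Strict Implicit. Unset Printing Implicit Defensive.
Import GRing.Theory.
Local Open Scope ring_scope.

Definition pset (X : Type) := X -> Prop.
Definition subset_of {X : Type} (A B : pset X) : Prop := forall x, A x -> B x.

Definition is_filter {X : Type} (F : pset (pset X)) : Prop :=
  [/\ F (fun _ => True),
      ~ F (fun _ => False),
      (forall A B, F A -> F B -> F (fun x => A x /\ B x)) &
      (forall A B, subset_of A B -> F A -> F B)].

Definition principal {X : Type} (x : X) : pset (pset X) := fun A => A x.

Definition filter_meet {X : Type} (F G : pset (pset X)) : pset (pset X) :=
  fun A => F A /\ G A.

Definition fmap {X Y : Type} (f : X -> Y) (F : pset (pset X)) : pset (pset Y) :=
  fun B => F (fun x => B (f x)).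

Definition filter_prod {X Y : Type} (F : pset (pset X)) (G : pset (pset Y))
  : pset (pset (X * Y)) :=
  fun P => exists A B, F A /\ G B /\ (forall a b, A a -> B b -> P (a, b)).

(* A convergence structure: conv F x means "F converges to x". *)
Definition convergence (X : Type) := pset (pset X) -> X -> Prop.

Definition is_convergence {X : Type} (c : convergence X) : Prop :=
  [/\ (forall F x, c F x -> is_filter F),
      (forall x, c (principal x) x),
      (forall F G x, c F x -> c G x -> c (filter_meet F G) x) &
      (forall F G x, c F x -> is_filter G -> subset_of F G -> c G x)].

Definition conv_continuous {X Y : Type} (cX : convergence X) (cY : convergence Y)
  (f : X -> Y) : Prop :=
  forall F x, cX F x -> cY (fmap f F) (f x).

Definition prod_conv {X Y : Type} (cX : convergence X) (cY : convergence Y)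
  : convergence (X * Y) :=
  fun F p => is_filter F /\ cX (fmap fst F) p.1 /\ cY (fmap snd F) p.2.

Definition filter_sub {G : zmodType} (F F' : pset (pset G)) : pset (pset G) :=
  fmap (fun p : G * G => p.1 - p.2) (filter_prod F F').

Definition is_convergence_group {G : zmodType} (c : convergence G) : Prop :=
  is_convergence c /\
  (forall F F' x y, c F x -> c F' y -> c (filter_sub F F') (x - y)).

Definition has_countable_base {X : Type} (V : pset (pset X)) : Prop :=
  exists b : nat -> pset X, forall A, V A <-> exists n, subset_of (b n) A.

Definition first_countable {X : Type} (c : convergence X) : Prop :=
  forall F x, c F x -> exists V, is_filter V /\ subset_of V F /\
                                 has_countable_base V /\ c V x.

Definition is_topology {X : Type} (T : pset (pset X)) : Prop :=
  [/\ T (fun _ => True),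
      (forall A B, T A -> T B -> T (fun x => A x /\ B x)) &
      (forall (I : Type) (U : I -> pset X), (forall i, T (U i)) ->
          T (fun x => exists i, U i x))].

Definition nbhd {X : Type} (T : pset (pset X)) (x : X) : pset (pset X) :=
  fun A => exists U, T U /\ U x /\ subset_of U A.

Definition top_conv {X : Type} (T : pset (pset X)) : convergence X :=
  fun F x => is_filter F /\ subset_of (nbhd T x) F.

Definition is_topological_group {G : zmodType} (T : pset (pset G)) : Prop :=
  is_topology T /\
  (forall (W : pset G) (x y : G), T W -> W (x - y) ->
     exists U V, [/\ T U, U x, T V, V y &
                     forall a b, U a -> V b -> W (a - b)]).

Definition dense_in {X : Type} (T : pset (pset X)) (D : pset X) : Prop :=
  forall U, T U -> (exists x, U x) -> exists x, U x /\ D x.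

Definition baire {X : Type} (T : pset (pset X)) : Prop :=
  forall D : nat -> pset X, (forall n, T (D n) /\ dense_in T (D n)) ->
    dense_in T (fun x => forall n, D n x).

Definition bihom {G H L : zmodType} (u : G -> H -> L) : Prop :=
  (forall g g' h, u (g + g') h = u g h + u g' h) /\
  (forall g h h', u g (h + h') = u g h + u g h').

Definition separately_continuous {X Y Z : Type}
  (cX : convergence X) (cY : convergence Y) (cZ : convergence Z)
  (u : X -> Y -> Z) : Prop :=
  (forall x, conv_continuous cY cZ (u x)) /\
  (forall y, conv_continuous cX cZ (fun x => u x y)).

From HB Require Import structures.
From mathcomp Require Import all_boot all_algebra.
From Stdlib Require Import Classical.
Import GRing.Theory.
Set Implicit Arguments. Unset Strict Implicit.
Local Open Scope ring_scope.

(* Let F -> (x, y) in G x H and let W be an open neighbourhood of u x y.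
   For p = (a, c) the bihomomorphism identity
       u a c = u a y - (u x (y - c) - u (a - x) (c - y))
   splits u p into three terms.  The first is close to u x y by continuity of
   u(., y) at x, the second is close to 0 by continuity of u x at 0 (using
   that the translate y - F of the second projection converges to 0 in the
   convergence group H).  The third, "mixed" term is the heart of the matter:
   since F - y has a coarser filter V -> 0 with a countable base (b n), it
   suffices to find a neighbourhood V1 of 0 in G and an index n with
   u (V1 x b n) close to 0.  This equicontinuity statement follows from the
   Baire property of G: the sets E n = {g | u g (b n) is small} cover G, so
   one of them is dense in a nonempty open set, and translating inside the
   group G gives the neighbourhood V1. *)

Section Filters.
Variable X : Type.

Lemma filter_conj (F : pset (pset X)) (A B C : pset X) :
  is_filter F -> F A -> F B -> (forall x, A x -> B x -> C x) -> F C.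
Proof.
case=> _ _ hI hM hA hB hABC; apply: hM (hI _ _ hA hB) => x [hAx hBx].
exact: hABC.
Qed.

Lemma fmap_filter (Y : Type) (f : X -> Y) (F : pset (pset X)) :
  is_filter F -> is_filter (fmap f F).
Proof.
case=> hT hF hI hM; split; rewrite /fmap //.
- by move=> A B; apply: hI.
- by move=> A B hAB; apply: hM => x; apply: hAB.
Qed.

Lemma nbhd_filter (T : pset (pset X)) (x : X) :
  is_topology T -> is_filter (nbhd T x).
Proof.
case=> hT hI _; split.
- by exists (fun _ => True).
- by case=> U [_ [hUx hU]]; apply: hU x hUx.
- move=> A B [U [hU [hUx hUA]]] [V [hV [hVx hVB]]].
  exists (fun z => U z /\ V z); split; first exact: hI.
  by split=> // z [hUz hVz]; split; [apply: hUA | apply: hVB].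
- move=> A B hAB [U [hU [hUx hUA]]]; exists U; split=> //; split=> // z hz.
  exact/hAB/hUA.
Qed.

Lemma top_conv_nbhd (T : pset (pset X)) (x : X) :
  is_topology T -> top_conv T (nbhd T x) x.
Proof. by move=> hT; split=> [|A //]; exact: nbhd_filter. Qed.

Lemma continuous_open_preimage (Y : Type) (cX : convergence X)
    (T : pset (pset Y)) (f : X -> Y) (F : pset (pset X)) (x : X) (W : pset Y) :
  conv_continuous cX (top_conv T) f -> cX F x -> T W -> W (f x) ->
  F (fun z => W (f z)).
Proof.
by move=> hf hF hW hWx; apply: (hf F x hF).2; exists W; split=> //; split=> // z.
Qed.

End Filters.

Section DifferenceFilters.
Variables (G : zmodType) (F : pset (pset G)) (y : G).
Hypothesis hF : is_filter F.

Lemma filter_sub_principal_l (P : pset G) :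
  filter_sub (principal y) F P -> F (fun b => P (y - b)).
Proof.
case=> A [B [hAy [hFB hAB]]].
by apply: (filter_conj hF hFB hFB) => b hb _; apply: hAB.
Qed.

Lemma filter_sub_principal_r (P : pset G) :
  filter_sub F (principal y) P -> F (fun a => P (a - y)).
Proof.
case=> A [B [hFA [hBy hAB]]].
by apply: (filter_conj hF hFA hFA) => a ha _; apply: hAB.
Qed.

End DifferenceFilters.

Section TopologicalGroup.
Variables (G : zmodType) (T : pset (pset G)).
Hypothesis hT : is_topological_group T.

Lemma split_zero_nbhd (W : pset G) : T W -> W 0 ->
  exists U V, [/\ T U, U 0, T V, V 0 & forall a b, U a -> V b -> W (a - b)].
Proof. by move=> hW hW0; apply: hT.2 => //; rewrite subrr. Qed.

Lemma translate_nbhd (V : pset G) (x : G) : T V -> V 0 ->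
  nbhd T x (fun a => V (a - x)).
Proof.
move=> hV hV0.
have [U [U' [hU hUx _ hU'x hUU']]] := hT.2 V x x hV (ltac:(by rewrite subrr)).
by exists U; split=> //; split=> // a ha; apply: hUU'.
Qed.

End TopologicalGroup.

Section ConvergenceGroup.
Variables (H : zmodType) (cH : convergence H).
Hypothesis hH : is_convergence_group cH.

Lemma conv_sub_principal_l (F : pset (pset H)) (y : H) :
  cH F y -> cH (filter_sub (principal y) F) 0.
Proof. by move=> hF; rewrite -(subrr y); apply: hH.2 => //; case: hH.1. Qed.

Lemma conv_sub_principal_r (F : pset (pset H)) (y : H) :
  cH F y -> cH (filter_sub F (principal y)) 0.
Proof. by move=> hF; rewrite -(subrr y); apply: hH.2 => //; case: hH.1. Qed.

End ConvergenceGroup.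

Section Bihomomorphism.
Variables (G H L : zmodType) (u : G -> H -> L).
Hypothesis hu : bihom u.

Lemma bihomBl (g g' : G) (h : H) : u (g - g') h = u g h - u g' h.
Proof. by apply: (addIr (u g' h)); rewrite -hu.1 !subrK. Qed.

Lemma bihomBr (g : G) (h h' : H) : u g (h - h') = u g h - u g h'.
Proof. by apply: (addIr (u g h')); rewrite -hu.2 !subrK. Qed.

Lemma bihom0l (h : H) : u 0 h = 0.
Proof. by rewrite -(subrr 0) bihomBl subrr. Qed.

Lemma bihom0r (g : G) : u g 0 = 0.
Proof. by rewrite -(subrr 0) bihomBr subrr. Qed.

Lemma bihom_expand (x a : G) (y c : H) :
  u a c = u a y - (u x (y - c) - u (a - x) (c - y)).
Proof.
rewrite bihomBr bihomBl !bihomBr (opprB (_ - _)) addrA.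
by rewrite [u a c - _ - _]addrAC (addrC (u a y)) subrK opprB addrK.
Qed.

Lemma bihom_expand_l (e a g : G) (h : H) :
  u a h = u e h - u g h - u (e - a - g) h.
Proof.
by rewrite !bihomBl [u e h - u a h - _]addrAC opprB (addrC (_ - _)) subrK.
Qed.

End Bihomomorphism.

Section BaireCover.
Variables (X : Type) (T : pset (pset X)) (x0 : X).
Hypotheses (hT : is_topology T) (hB : baire T).

(* The exterior of A: the union of all open sets disjoint from A. *)
Definition exterior (A : pset X) : pset X :=
  fun x => exists O : {O : pset X | T O /\ forall g, O g -> ~ A g}, sval O x.

Lemma exterior_open (A : pset X) : T (exterior A).
Proof. by case: hT => _ _ hU; apply: hU; case=> O []. Qed.

Lemma baire_cover (E : nat -> pset X) : (forall x, exists n, E n x) ->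
  exists n U, [/\ T U, exists x, U x &
    forall z, U z -> forall O, T O -> O z -> exists g, O g /\ E n g].
Proof.
move=> hcov.
(* Otherwise every exterior of E n is open dense, and a point in all of them
   lies in no E n. *)
have [n hn] : exists n, ~ dense_in T (exterior (E n)).
  apply: NNPP => hall.
  have hdense n : T (exterior (E n)) /\ dense_in T (exterior (E n)).
    split; first exact: exterior_open.
    by apply: NNPP => hn; apply: hall; exists n.
  have hTT : T (fun _ => True) by case: hT.
  have [x [_ hx]] := hB hdense hTT (ex_intro _ x0 Logic.I).
  have [m hm] := hcov x; have [[O hO] hOx] := hx m.
  exact: hO.2 x hOx hm.
(* A nonempty open U missing the exterior of E n is the required set. *)
have [U [hU hUne hUext]] :
    exists U, [/\ T U, exists x, U x & forall z, U z -> ~ exterior (E n) z].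
  apply: NNPP => hno; apply: hn => U hU hUne; apply: NNPP => hdisj.
  by apply: hno; exists U; split=> // z hz hext; apply: hdisj; exists z.
exists n, U; split=> // z hz O hO hOz; apply: NNPP => hno; apply: (hUext z hz).
by exists (exist _ O (conj hO (fun g hg hE => hno (ex_intro _ g (conj hg hE))))).
Qed.

End BaireCover.

Section Equicontinuity.
Variables (G H L : zmodType) (u : G -> H -> L).
Variables (TG : pset (pset G)) (cH : convergence H) (TL : pset (pset L)).
Hypotheses (hu : bihom u) (hG : is_topological_group TG) (hGb : baire TG)
  (hL : is_topological_group TL)
  (hsep : separately_continuous (top_conv TG) cH (top_conv TL) u).

Lemma equicontinuous_on_base (V : pset (pset H)) (b : nat -> pset H)
    (hb : forall A, V A <-> exists n, subset_of (b n) A) (hV : cH V 0)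
    (W : pset L) :
  TL W -> W 0 ->
  exists V1 n, [/\ TG V1, V1 0 & forall a h, V1 a -> b n h -> W (u a h)].
Proof.
move=> hW hW0; have hGt := hG.1.
have [A [N [hA hA0 hN hN0 hAN]]] := split_zero_nbhd hL hW hW0.
have [W1 [W2 [hW1 hW10 hW2 hW20 hW12]]] := split_zero_nbhd hL hA hA0.
(* E n: the g with u g (b n) inside W1 and W2; they cover G by continuity
   of u g at 0, since V -> 0 has the base (b n). *)
pose E n g := forall h, b n h -> W1 (u g h) /\ W2 (u g h).
have E_cover g : exists n, E n g.
  have hW1W2 : TL (fun z => W1 z /\ W2 z) by case: hL.1 => _ hI _; apply: hI.
  have hW1W2g : W1 (u g 0) /\ W2 (u g 0) by rewrite (bihom0r hu).
  have := continuous_open_preimage (hsep.1 g) hV hW1W2 hW1W2g.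
  by case/hb => n hn; exists n.
(* Baire: E n is dense in a nonempty open U; choose e in U and E n and a
   neighbourhood V1 of 0 with e - V1 inside U. *)
have [n [U [hU [e0 he0] hUdense]]] := baire_cover 0 hGt hGb E_cover.
have [e [he hEe]] := hUdense e0 he0 U hU he0.
have [U1 [V1 [_ hU1e hV1 hV10 hU1V1]]] := hG.2 U e 0 hU (ltac:(by rewrite subr0)).
exists V1, n; split=> // a h ha hh.
have hea : U (e - a) := hU1V1 e a hU1e ha.
(* Approximate e - a by some g in E n so closely that u (e - a - g) h is in N;
   then u a h = u e h - u g h - u (e - a - g) h lies in W1 - W2 - N. *)
have [O [hO [hO0 hON]]] : nbhd TG 0 (fun g => N (u g h)).
  apply: (continuous_open_preimage (hsep.2 h) (top_conv_nbhd 0 hGt) hN).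
  by rewrite (bihom0l hu).
have [P [Q [_ hPe hQ hQe hPQ]]] := hG.2 O (e - a) (e - a) hO (ltac:(by rewrite subrr)).
have [g [hQg hEg]] := hUdense (e - a) hea Q hQ hQe.
rewrite (bihom_expand_l hu e a g h); apply: hAN.
- by apply: hW12; [exact: (hEe h hh).1 | exact: (hEg h hh).2].
- by apply: hON; apply: hPQ.
Qed.

End Equicontinuity.

Theorem proposition3p4
  (G : zmodType) (TG : pset (pset G))
  (H : zmodType) (cH : convergence H)
  (L : zmodType) (TL : pset (pset L))
  (hG : is_topological_group TG) (hGb : baire TG)
  (hH : is_convergence_group cH) (hH1 : first_countable cH)
  (hL : is_topological_group TL)
  (u : G -> H -> L)
  (hu : bihom u)
  (hsep : separately_continuous (top_conv TG) cH (top_conv TL) u) :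
  conv_continuous (prod_conv (top_conv TG) cH) (top_conv TL)
    (fun p : G * H => u p.1 p.2).
Proof.
move=> F [x y] [hF [hFx hFy]] /=; split; first exact: fmap_filter.
move=> A [W [hW [hWxy hWA]]].
have [P [Q [hP hPxy hQ hQ0 hPQ]]] := hL.2 W (u x y) 0 hW (ltac:(by rewrite subr0)).
have [Q1 [Q2 [hQ1 hQ10 hQ2 hQ20 hQ12]]] := split_zero_nbhd hL hQ hQ0.
have near_first : F (fun p => P (u p.1 y)).
  exact: (continuous_open_preimage (hsep.2 y) hFx hP hPxy).
(* u x (y - c) is near 0, since y - c -> 0 and u x is continuous at 0 *)
have near_second : F (fun p => Q1 (u x (y - p.2))).
  have := continuous_open_preimage (hsep.1 x) (conv_sub_principal_l hH hFy) hQ1.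
  by rewrite (bihom0r hu) => /(_ hQ10) /(filter_sub_principal_l (fmap_filter snd hF)).
(* u (a - x) (c - y) is near 0, by equicontinuity on a base set of F - y *)
have near_mixed : F (fun p => Q2 (u (p.1 - x) (p.2 - y))).
  have [V [_ [hVF [[b hb] hV0]]]] := hH1 _ _ (conv_sub_principal_r hH hFy).
  have [V1 [n [hV1 hV10 hV1b]]] :=
    equicontinuous_on_base hu hG hGb hL hsep hb hV0 hQ2 hQ20.
  have near_x : F (fun p => V1 (p.1 - x)) := hFx.2 _ (translate_nbhd hG x hV1 hV10).
  have near_y : F (fun p => b n (p.2 - y)).
    apply: (filter_sub_principal_r (fmap_filter snd hF)); apply: hVF.
    by apply/hb; exists n.
  by apply: (filter_conj hF near_x near_y) => p; apply: hV1b.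
apply: (filter_conj hF (filter_conj hF near_first near_second _) near_mixed).
  by move=> p h1 h2; exact: (conj h1 h2).
move=> [a c] /= [h1 h2] h3; apply: hWA; rewrite (bihom_expand hu x a y c).
by apply: hPQ => //; apply: hQ12.
Qed.
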